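(* For a prime $p$ and an integer $n\geq p$, $B_{n-p}\equiv V_n\pmod p$.
   Context: $B_n$ is the $n$-th Bell number (number of partitions of an $n$-element set). $V_n$ is the number of partitions of $\{1,\dots,n\}$ containing no singleton blocks; equivalently $\sum_{n\geq0}V_n\frac{t^n}{n!}=e^{e^t-1-t}$. *)

From mathcomp Require Import all_boot.

Set Implicit Arguments.
Unset Strict Implicit.
Unset Printing Implicit Defensive.

Definition set_partitions (n : nat) : {set {set {set 'I_n}}} :=
  [set P : {set {set 'I_n}} | partition P [set: 'I_n]].

Definition bell (n : nat) : nat := #|set_partitions n|.

Definition nosingleton_partitions (n : nat) : nat :=
  #|[set P in set_partitions n | [forall B in P, #|B| != 1]]|.

(** Let s be the cyclic permutation of the last p points of {0, ..., n-1}.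
  The group <[s]>, of prime order p, acts on singleton-free partitions, so
  their number is congruent mod p to the number of s-invariant ones. A
  singleton-free partition is s-invariant exactly when the last p points lie
  in one block, and such partitions are in bijection with the partitions of
  the first n-p points: remove the last p points from their block and split
  the rest of that block into singletons. *)

From mathcomp Require Import all_boot all_fingroup.
From mathcomp Require Import pgroup sylow cyclic zify.

Set Implicit Arguments.
Unset Strict Implicit.
Unset Printing Implicit Defensive.

Section Partitions.
Variable T : finType.
Implicit Types (P Q : {set {set T}}) (B D : {set T}).

Definition partitions_of D : {set {set {set T}}} := [set P | partition P D].

Definition singleton_free_partitions : {set {set {set T}}} :=
  [set P in partitions_of [set: T] | [forall B in P, #|B| != 1]].

Lemma partition_intro P D :
    {in P, forall B, B != set0} -> {in P, forall B, B \subset D} ->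
    {in D, forall x, exists2 B, B \in P & x \in B} ->
    (forall B1 B2 x, B1 \in P -> B2 \in P -> x \in B1 -> x \in B2 -> B1 = B2) ->
  partition P D.
Proof.
move=> P_neq0 P_subD D_cover P_uniq; apply/and3P; split.
- rewrite eqEsubset; apply/andP; split; first by apply/bigcupsP => B /P_subD.
  by apply/subsetP => x /D_cover [B PB xB]; apply/bigcupP; exists B.
- apply/trivIsetP => B1 B2 PB1 PB2 neqB; rewrite -setI_eq0; apply/set0Pn.
  by case=> x /setIP [xB1 xB2]; rewrite (P_uniq _ _ _ PB1 PB2 xB1 xB2) eqxx in neqB.
- by apply/negP => /P_neq0; rewrite eqxx.
Qed.

Lemma partition_eq_block P D B1 B2 x :
  partition P D -> B1 \in P -> B2 \in P -> x \in B1 -> x \in B2 -> B1 = B2.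
Proof.
move=> /partition_trivIset trivP PB1 PB2 xB1 xB2.
by rewrite -(def_pblock trivP PB1 xB1) (def_pblock trivP PB2 xB2).
Qed.

Lemma partition_exists_block P D x :
  partition P D -> x \in D -> exists2 B, B \in P & x \in B.
Proof. by move=> /cover_partition <- /bigcupP [B PB xB]; exists B. Qed.

Lemma singleton_free_partitionsP P :
  reflect (partition P [set: T] /\ {in P, forall B, #|B| != 1})
          (P \in singleton_free_partitions).
Proof. by rewrite !inE; apply: (iffP andP) => -[-> /forall_inP]. Qed.

Lemma partition_setactE P (g : {perm T}) :
  ((perm_action T)^*^*)%act P g = [set [set g x | x in (B : {set T})] | B in P].
Proof. by rewrite /= setactE; apply: eq_imset => B /=; rewrite setactE. Qed.

Lemma acts_singleton_free_partitions (G : {group {perm T}}) :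
  [acts G, on singleton_free_partitions | (perm_action T)^*^*].
Proof.
apply/actsP => g _ P; have g_inj : injective g by apply: perm_inj.
have gT : [set g x | x in [set: T]] = [set: T].
  by apply/eqP; rewrite eqEcard subsetT card_imset ?leqnn.
rewrite (partition_setactE P g) !inE -{1}gT imset_partition //; congr (_ && _).
apply/forall_inP/forall_inP => singleton_free B.
  by move=> PB; rewrite -(card_imset B g_inj) singleton_free ?imset_f.
by case/imsetP=> B' PB' ->; rewrite card_imset ?singleton_free.
Qed.

End Partitions.

Lemma card_partitions_inj (aT rT : finType) (f : aT -> rT) :
  injective f -> #|partitions_of [set: aT]| = #|partitions_of (f @: [set: aT])|.
Proof.
move=> f_inj; set imsetf := fun B : {set aT} => f @: B.
have imsetP_inj : injective (fun P : {set {set aT}} => imsetf @: P).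
  exact/imset_inj/imset_inj.
rewrite -(card_imset _ imsetP_inj); apply: eq_card => Q; rewrite !inE.
apply/imsetP/idP => [[P] | partQ]; first by rewrite inE => partP ->; rewrite imset_partition.
have preimK : imsetf @: [set f @^-1: (B : {set rT}) | B in Q] = Q.
  rewrite -imset_comp -[RHS]imset_id; apply: eq_in_imset => B QB /=.
  apply/setP => x; apply/imsetP/idP => [[y] | xB]; first by rewrite inE => fyB ->.
  have /imsetP [y _ fy] := subsetP (partitionS partQ QB) x xB.
  by exists y; rewrite ?inE -?fy.
exists [set f @^-1: (B : {set rT}) | B in Q]; last by rewrite preimK.
by rewrite inE -(imset_partition _ _ f_inj) preimK.
Qed.

Section MergeSingletons.
Variables (T : finType) (C : {set T}).
Hypothesis C_gt1 : 1 < #|C|.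
Implicit Types (P Q : {set {set T}}) (B : {set T}).

Definition partitions_with_block : {set {set {set T}}} :=
  [set P in singleton_free_partitions T | [exists B in P, C \subset B]].

Definition merge_singletons Q : {set {set T}} :=
  [set B in Q | #|B| != 1] :|: [set C :|: [set x | [set x] \in Q]].

(* [~~ (pblock P x \subset ~: C)] says that x lies in the block containing C. *)
Definition split_block P : {set {set T}} :=
  [set B in P | B \subset ~: C] :|:
  [set [set x] | x in ~: C & ~~ (pblock P x \subset ~: C)].

Let C_neq0 : C != set0. Proof. by rewrite -card_gt0 ltnW. Qed.

Lemma not_subset_complC B : C \subset B -> ~~ (B \subset ~: C).
Proof.
move=> sCB; have /set0Pn [c Cc] := C_neq0.
by apply/negP => /subsetP /(_ c (subsetP sCB c Cc)); rewrite inE Cc.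
Qed.

Lemma merge_singletonsP Q :
  partition Q (~: C) -> merge_singletons Q \in partitions_with_block.
Proof.
move=> partQ; set U := [set x | [set x] \in Q]; set B0 := C :|: U.
have in_merge B : (B \in merge_singletons Q) = (B \in Q) && (#|B| != 1) || (B == B0).
  by rewrite !inE.
have merge_B0 : B0 \in merge_singletons Q by rewrite in_merge eqxx orbT.
have notin_B0 B x : B \in Q -> #|B| != 1 -> x \in B -> x \notin B0.
  move=> QB nB xB; rewrite !inE negb_or.
  have /subsetP/(_ x xB) := partitionS partQ QB; rewrite inE => -> /=.
  by apply: contra nB => Qx; rewrite -(partition_eq_block partQ Qx QB (set11 x) xB) cards1.
have B0_gt1 : #|B0| != 1.
  by rewrite neq_ltn (leq_trans C_gt1) ?orbT ?subset_leq_card ?subsetUl.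
rewrite inE; apply/andP; split; last by apply/exists_inP; exists B0; rewrite ?subsetUl.
apply/singleton_free_partitionsP; split; last first.
  by move=> B; rewrite in_merge => /orP [/andP [] | /eqP ->].
apply: partition_intro.
- move=> B; rewrite in_merge => /orP [/andP [QB _] | /eqP ->]; first exact: partition_neq0 partQ QB.
  by rewrite setU_eq0 negb_and C_neq0.
- by move=> B _; apply: subsetT.
- move=> x _; case: (boolP (x \in C)) => [Cx | nCx]; first by exists B0; rewrite // inE Cx.
  have [B QB xB] : exists2 B, B \in Q & x \in B.
    by apply: (partition_exists_block partQ); rewrite inE.
  case: (boolP (#|B| == 1)) => [/cards1P [y defB] | nB].
    exists B0 => //; move: xB QB; rewrite defB => /set1P ->.
    by rewrite !inE => ->; rewrite orbT.
  by exists B; rewrite // in_merge QB nB.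
- move=> B1 B2 x; rewrite !in_merge.
  case/orP => [/andP [QB1 nB1] | /eqP ->]; case/orP => [/andP [QB2 nB2] | /eqP ->] xB1 xB2 //.
  + exact: partition_eq_block partQ QB1 QB2 xB1 xB2.
  + by have := notin_B0 _ _ QB1 nB1 xB1; rewrite xB2.
  + by have := notin_B0 _ _ QB2 nB2 xB2; rewrite xB1.
Qed.

Section SplitBlock.
Variables (P : {set {set T}}) (B0 : {set T}).
Hypotheses (P_with_block : P \in partitions_with_block) (PB0 : B0 \in P) (sCB0 : C \subset B0).

Lemma with_block_partition : partition P [set: T].
Proof. by move: P_with_block; rewrite inE => /andP [/singleton_free_partitionsP []]. Qed.

Lemma with_block_singleton_free B : B \in P -> #|B| != 1.
Proof. by move: P_with_block; rewrite inE => /andP [/singleton_free_partitionsP [_ /(_ B)]]. Qed.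

Lemma subset_complC_block B : B \in P -> (B \subset ~: C) = (B != B0).
Proof.
move=> PB; have [-> | neqB] := eqVneq B B0; first exact/negbTE/not_subset_complC.
have trivP := partition_trivIset with_block_partition.
by rewrite -disjoints_subset (disjointWr sCB0) ?(trivIsetP trivP).
Qed.

Lemma pblock_complC x : (pblock P x \subset ~: C) = (x \notin B0).
Proof.
have coverP : x \in cover P by rewrite (cover_partition with_block_partition).
rewrite subset_complC_block ?pblock_mem //; congr negb; apply/eqP/idP => [<- | xB0].
  by rewrite mem_pblock.
exact: def_pblock (partition_trivIset with_block_partition) PB0 xB0.
Qed.

Lemma split_blockE :
  split_block P = [set B in P | B != B0] :|: [set [set x] | x in B0 :\: C].
Proof.
rewrite /split_block; have -> : [set x in ~: C | ~~ (pblock P x \subset ~: C)] = B0 :\: C.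
  by apply/setP => x; rewrite !inE pblock_complC negbK andbC.
congr (_ :|: _); apply/setP => B; rewrite !inE.
by case PB: (B \in P); rewrite /= ?subset_complC_block ?PB.
Qed.

Lemma split_blockP : partition (split_block P) (~: C).
Proof.
have partP := with_block_partition.
have in_split B : (B \in split_block P) =
    (B \in P) && (B != B0) || (B \in [set [set x] | x in B0 :\: C]).
  by rewrite split_blockE !inE.
apply: partition_intro.
- move=> B; rewrite in_split => /orP [/andP [PB _] | /imsetP [x _ ->]].
    exact: partition_neq0 partP PB.
  by apply/set0Pn; exists x; apply: set11.
- move=> B; rewrite in_split => /orP [/andP [PB neqB] | /imsetP [x]].
    by rewrite subset_complC_block.
  by rewrite !inE => /andP [nCx _] ->; rewrite sub1set inE.
- move=> x nCx; have [B PB xB] := partition_exists_block partP (in_setT x).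
  have [defB | neqB] := eqVneq B B0; last by exists B; rewrite // in_split PB neqB.
  exists [set x]; last exact: set11.
  by rewrite in_split imset_f ?orbT // inE -defB xB andbT -in_setC.
- move=> B1 B2 x; rewrite !in_split.
  case/orP => [/andP [PB1 neqB1] | /imsetP [y1 /setDP [y1B0 _] ->]];
  case/orP => [/andP [PB2 neqB2] | /imsetP [y2 /setDP [y2B0 _] ->]];
  rewrite ?inE => xB1 xB2.
  + exact: partition_eq_block partP PB1 PB2 xB1 xB2.
  + move/eqP: xB2 y2B0 => <- xB0.
    by rewrite (partition_eq_block partP PB1 PB0 xB1 xB0) eqxx in neqB1.
  + move/eqP: xB1 y1B0 => <- xB0.
    by rewrite (partition_eq_block partP PB2 PB0 xB2 xB0) eqxx in neqB2.
  + by move/eqP: xB1 => <-; move/eqP: xB2 => <-.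
Qed.

Lemma merge_split_block : merge_singletons (split_block P) = P.
Proof.
have non_singletons : [set B in split_block P | #|B| != 1] = [set B in P | B != B0].
  apply/setP => B; rewrite split_blockE !inE.
  case PB: (B \in P) => /=.
    rewrite with_block_singleton_free // andbT; apply/orP/idP => [[// | /imsetP [x _ defB]] | ->].
      by move: PB; rewrite defB => /with_block_singleton_free; rewrite cards1.
    by left.
  by apply/negbTE/andP => -[/imsetP [x _ ->]]; rewrite cards1.
have singletons : [set x | [set x] \in split_block P] = B0 :\: C.
  apply/setP => x; rewrite split_blockE !inE (mem_imset _ _ set1_inj) inE.
  case: (boolP ([set x] \in P)) => [/with_block_singleton_free | _] //.
  by rewrite cards1.
have merged : C :|: (B0 :\: C) = B0.
  by apply/setP => x; rewrite !inE; case: (boolP (x \in C)) => //= /(subsetP sCB0).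
rewrite /merge_singletons non_singletons singletons merged.
apply/setP => B; rewrite !inE; have [-> | _] := eqVneq B B0; first by rewrite PB0.
by rewrite andbT orbF.
Qed.

End SplitBlock.

Lemma split_merge_singletons Q :
  partition Q (~: C) -> split_block (merge_singletons Q) = Q.
Proof.
move=> partQ; set U := [set x | [set x] \in Q].
have merge_B0 : C :|: U \in merge_singletons Q by rewrite !inE eqxx orbT.
rewrite (split_blockE (merge_singletonsP partQ) merge_B0 (subsetUl C U)).
have -> : (C :|: U) :\: C = U.
  apply/setP => x; rewrite !inE andb_orr andNb /=; apply/andb_idl => Qx.
  by have := partitionS partQ Qx; rewrite sub1set inE.
apply/setP => B; rewrite !inE.
have [/cards1P [x ->] | nB] := boolP (#|B| == 1).
  by rewrite andbF /= andbN (mem_imset _ _ set1_inj) inE.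
have [QB | _] /= := boolP (B \in Q); last first.
  by rewrite andbN; apply/negbTE; apply: contra nB => /imsetP [x _ ->]; rewrite cards1.
apply/orP; left; apply: contraNneq (not_subset_complC (subsetUl C U)) => <-.
exact: partitionS partQ QB.
Qed.

Lemma card_partitions_with_block :
  #|partitions_with_block| = #|partitions_of (~: C)|.
Proof.
have block_of P : P \in partitions_with_block -> exists2 B0, B0 \in P & C \subset B0.
  by rewrite inE => /andP [_ /exists_inP].
have merge_split P : P \in partitions_with_block -> merge_singletons (split_block P) = P.
  by move=> P_with_block; have [B0 PB0 sCB0] := block_of P P_with_block;
    apply: merge_split_block P_with_block PB0 sCB0.
rewrite -(card_in_imset (can_in_inj merge_split)); apply: eq_card => Q; rewrite inE.
apply/imsetP/idP => [[P P_with_block ->] | partQ].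
  by have [B0 PB0 sCB0] := block_of P P_with_block; apply: split_blockP P_with_block PB0 sCB0.
by exists (merge_singletons Q); rewrite ?merge_singletonsP ?split_merge_singletons.
Qed.

End MergeSingletons.

Section SingleCycle.
Variables (T : finType) (s : {perm T}) (c : T).
Local Notation C := (orbit 'P <[s]>%g c).
Local Notation partition_action := ((perm_action T)^*^*)%act.
Hypotheses (s_prime : prime #[s]%g) (s_fix : forall x, x \notin C -> s x = x).

Lemma perm_neq1 : s != 1%g.
Proof. by rewrite -order_eq1; apply: contraTneq s_prime => ->. Qed.

Lemma orbit_perm_closed x : x \in C -> s x \in C.
Proof. exact: orbit_trans (mem_orbit 'P x (cycle_id s)). Qed.

Lemma one_lt_card_orbit : 1 < #|C|.
Proof.
have /forallPn [x sx] : ~~ [forall x, s x == x].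
  by apply: contra perm_neq1 => /forallP fix_s; apply/eqP/permP => x; rewrite perm1; apply/eqP.
have Cx : x \in C by apply: contraNT sx => /s_fix ->.
by apply/card_gt1P; exists x, (s x); rewrite Cx orbit_perm_closed // eq_sym.
Qed.

Lemma perm_set_stable (B : {set T}) : (C \subset B) || [disjoint C & B] -> s @: B = B.
Proof.
move=> C_in_or_out; apply/eqP; rewrite eqEcard card_imset ?leqnn ?andbT; last exact: perm_inj.
apply/subsetP => _ /imsetP [x Bx ->].
have [Cx | nCx] := boolP (x \in C); last by rewrite s_fix.
case/orP: C_in_or_out => [sCB | disCB]; first by rewrite (subsetP sCB) ?orbit_perm_closed.
by rewrite (disjointFr disCB Cx) in Bx.
Qed.

(* The stabiliser of the block of c in <[s]> contains a nontrivial element: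
   s itself if the block meets ~: C, else an element moving c inside the block.
   As #[s] is prime, it is all of <[s]>. *)
Lemma fixed_partition_block (P : {set {set T}}) :
    P \in singleton_free_partitions T -> P \in 'Fix_partition_action[s]%g ->
  C \subset pblock P c.
Proof.
case/singleton_free_partitionsP => partP singleton_free /afix1P fixP.
have coverP x : x \in cover P by rewrite (cover_partition partP).
set B0 := pblock P c; have PB0 : B0 \in P := pblock_mem (coverP c).
have cB0 : c \in B0 by rewrite mem_pblock.
have fix_cycle g : g \in <[s]>%g -> partition_action P g = P.
  by case/cycleP => k ->; elim: k => [|k IHk]; rewrite ?act1 // expgSr actM IHk.
pose H := 'C[B0 | ('P^*)%act]%G.
have stab g y : g \in <[s]>%g -> y \in B0 -> y \in g @: B0 -> g \in H.
  move=> sg yB0 ygB0; apply/astab1P; rewrite /= setactE.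
  have PgB0 : g @: B0 \in P by rewrite -(fix_cycle g sg) partition_setactE imset_f.
  exact: partition_eq_block partP PgB0 PB0 ygB0 yB0.
have [g sg /andP [g_neq1 Hg]] : exists2 g, g \in <[s]>%g & (g != 1%g) && (g \in H).
  have /set0Pn [y /setD1P [y_neq_c yB0]] : B0 :\ c != set0.
    rewrite -card_gt0 -(ltn_add2l (c \in B0)) -cardsD1 cB0 ltn_neqAle eq_sym.
    by rewrite singleton_free // card_gt0; apply/set0Pn; exists c.
  have [Cy | nCy] := boolP (y \in C).
    case/orbitP: Cy => g sg gc; exists g => //=; rewrite (stab g y) // ?andbT.
      by apply: contra_neq y_neq_c => g1; rewrite -gc g1 act1.
    by apply/imsetP; exists c; rewrite // -gc.
  exists s; rewrite ?cycle_id // perm_neq1 (stab s y) ?cycle_id //.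
  by rewrite -{1}(s_fix nCy) imset_f.
have sH : (<[s]> \subset H)%g.
  apply: contraTT isT => /(prime_TIg s_prime) /setP /(_ g).
  by rewrite in_setI sg Hg inE (negbTE g_neq1).
apply/subsetP => x /orbitP [h /(subsetP sH) /astab1P]; rewrite /= setactE => hB0 <-.
by rewrite -hB0; apply: imset_f.
Qed.

Lemma afix_singleton_free_partitions :
  'Fix_(singleton_free_partitions T | partition_action)(<[s]>)%g =
  partitions_with_block C.
Proof.
apply/setP => P; rewrite afix_cycle in_setI [RHS]inE.
case sfP: (P \in singleton_free_partitions T) => //=.
apply/idP/exists_inP => [fixP | [B0 PB0 sCB0]].
  have /singleton_free_partitionsP [partP _] := sfP.
  have coverP : c \in cover P by rewrite (cover_partition partP).
  by exists (pblock P c); rewrite ?pblock_mem ?fixed_partition_block.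
have /singleton_free_partitionsP [partP _] := sfP.
apply/afix1P; rewrite partition_setactE -[RHS]imset_id; apply: eq_in_imset => B PB.
apply: perm_set_stable; have [-> | neqB] := eqVneq B B0; first by rewrite sCB0.
by rewrite disjoint_sym (disjointWr sCB0) ?orbT ?(trivIsetP (partition_trivIset partP)).
Qed.

Theorem card_singleton_free_partitions_mod :
  #|singleton_free_partitions T| = #|partitions_of (~: C)| %[mod #[s]%g].
Proof.
have s_pgroup : (#[s].-group <[s]>)%g by apply: pnat_id.
rewrite (pgroup_fix_mod s_pgroup (acts_singleton_free_partitions _)).
by rewrite afix_singleton_free_partitions card_partitions_with_block ?one_lt_card_orbit.
Qed.

End SingleCycle.

Section LastCycle.
Variables (n p : nat).
Hypotheses (p_gt0 : 0 < p) (p_le_n : p <= n).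
Local Notation m := (n - p).

(* The cycle n-p -> n-p+1 -> ... -> n-1 -> n-p; the default of [insubd] is never used. *)
Definition rot_last (x : 'I_n) : 'I_n :=
  insubd x (if x < m then x : nat else m + (x - m).+1 %% p).

Lemma iter_rot_last k x :
  val (iter k rot_last x) = if x < m then x : nat else m + (x - m + k) %% p.
Proof.
have x_lt_n := ltn_ord x.
elim: k => [|k IHk] /=.
  by case: ifP => // x_ge_m; rewrite addn0 modn_small; lia.
rewrite val_insubd; move: IHk; case: (iter k rot_last x) => y y_lt_n /= ->.
case: (ltnP x m) => [x_lt_m | x_ge_m]; first by rewrite x_lt_m if_same.
rewrite [m + _ < m]ltnNge leq_addr /= addKn.
have -> : ((x - m + k) %% p).+1 %% p = (x - m + k.+1) %% p.
  by rewrite addnS -[in LHS]addn1 -[in RHS]addn1 modnDml.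
by have := ltn_pmod (x - m + k.+1) p_gt0; case: ifP => //; lia.
Qed.

Lemma iter_rot_last_period x : iter p rot_last x = x.
Proof.
apply: val_inj; rewrite iter_rot_last; case: ltnP => // x_ge_m.
by rewrite modnDr modn_small ?subnKC //; have := ltn_ord x; lia.
Qed.

Lemma rot_last_inj : injective rot_last.
Proof.
move=> x y eq_rot; rewrite -(iter_rot_last_period x) -(iter_rot_last_period y).
by case: p p_gt0 => // q _; rewrite !iterSr eq_rot.
Qed.

Definition rot_last_perm : {perm 'I_n} := perm rot_last_inj.

Lemma rot_last_permX k x :
  val ((rot_last_perm ^+ k)%g x) = if x < m then x : nat else m + (x - m + k) %% p.
Proof. by rewrite permX -iter_rot_last; congr val; apply: eq_iter; apply: permE. Qed.

Lemma first_last_proof : m < n. Proof. by lia. Qed.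

Definition first_last : 'I_n := Ordinal first_last_proof.

Lemma rot_last_permX_first k : val ((rot_last_perm ^+ k)%g first_last) = m + k %% p.
Proof. by rewrite rot_last_permX /= ltnn subnn. Qed.

Lemma order_rot_last_perm : prime p -> #[rot_last_perm]%g = p.
Proof.
case/primeP => p_gt1 div_p; have : (#[rot_last_perm] %| p)%g.
  rewrite order_dvdn; apply/eqP/permP => x; rewrite permX perm1 -[RHS](iter_rot_last_period x).
  by apply: eq_iter; apply: permE.
case/div_p/orP => /eqP // /eqP; rewrite order_eq1 => /eqP.
move/(congr1 (fun g : {perm 'I_n} => val (g first_last))).
by rewrite perm1 -[rot_last_perm in LHS]expg1 rot_last_permX_first modn_small //=; lia.
Qed.

Lemma orbit_rot_last_perm :
  orbit 'P <[rot_last_perm]>%g first_last = [set x : 'I_n | m <= x].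
Proof.
apply/setP => x; rewrite inE; apply/orbitP/idP => [[_ /cycleP [k ->] <-] | x_ge_m].
  by rewrite /= rot_last_permX_first leq_addr.
exists (rot_last_perm ^+ (x - m))%g; first exact: mem_cycle.
by apply: val_inj; rewrite /= rot_last_permX_first modn_small; have := ltn_ord x; lia.
Qed.

Lemma rot_last_perm_fix (x : 'I_n) : x < m -> rot_last_perm x = x.
Proof. by move=> x_lt_m; apply: val_inj; rewrite -[rot_last_perm]expg1 rot_last_permX x_lt_m. Qed.

End LastCycle.

Lemma bell_card_partitions_prefix n m (m_le_n : m <= n) :
  bell m = #|partitions_of [set x : 'I_n | x < m]|.
Proof.
have widen_inj : injective (widen_ord m_le_n) by move=> x y /(congr1 val) /= /val_inj.
rewrite /bell (card_partitions_inj widen_inj); congr #|partitions_of _|.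
apply/setP => x; rewrite inE; apply/imsetP/idP => [[y _ ->] | x_lt_m]; first exact: (ltn_ord y).
by exists (Ordinal x_lt_m); last exact: val_inj.
Qed.

Theorem corollary3 (p n : nat) :
  prime p -> p <= n -> bell (n - p) = nosingleton_partitions n %[mod p].
Proof.
move=> p_prime p_le_n; set s := rot_last_perm (prime_gt0 p_prime) p_le_n.
have s_prime : prime #[s]%g by rewrite order_rot_last_perm.
have s_fix x : x \notin orbit 'P <[s]>%g (first_last (prime_gt0 p_prime) p_le_n) -> s x = x.
  by rewrite orbit_rot_last_perm inE -ltnNge; apply: rot_last_perm_fix.
have := card_singleton_free_partitions_mod s_prime s_fix.
rewrite order_rot_last_perm // orbit_rot_last_perm => card_mod.
rewrite (bell_card_partitions_prefix (leq_subr p n)).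
have -> : [set x : 'I_n | x < n - p] = ~: [set x : 'I_n | n - p <= x].
  by apply/setP => x; rewrite !inE -ltnNge.
by rewrite -card_mod.
Qed.
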